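(* Let $q$ be a prime power and $T\in\mathbb F_q[X,Y,Z]$ a reduced polynomial. Suppose either (1) $T$ satisfies Property (a): $T(a,0,z)=T(0,b,z)=z$ for all $a,b,z\in\mathbb F_q$, together with at least one of Property (c): for all $a,b,c,d\in\mathbb F_q$ with $a\neq c$ there is a unique $x$ with $T(x,a,b)=T(x,c,d)$; or Property (e): for all $a,b,c,d\in\mathbb F_q$ with $a\neq c$ there is a unique pair $(y,z)$ with $T(a,y,z)=b$ and $T(c,y,z)=d$; or (2) $T$ satisfies Property (d): for all $a,b,c\in\mathbb F_q$ there is a unique $z$ with $T(a,b,z)=c$. Then $T(X,Y,Z)$ is a permutation polynomial over $\mathbb F_q$, i.e. for every $d\in\mathbb F_q$ the equation $T(x,y,z)=d$ has exactly $q^2$ solutions $(x,y,z)\in\mathbb F_q^3$.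
   Context: A polynomial is reduced if its degree in each variable is less than $q$. *)

From HB Require Import structures.
From mathcomp Require Import all_boot all_order all_algebra all_field.
From mathcomp Require Import mpoly.
Set Implicit Arguments. Unset Strict Implicit. Unset Printing Implicit Defensive.
Import GRing.Theory.
Local Open Scope ring_scope.

Definition ev3 (F : finFieldType) (T : {mpoly F[3]}) (x y z : F) : F :=
  T.@[fun i : 'I_3 => nth 0 [:: x; y; z] i].

Definition reduced (F : finFieldType) (T : {mpoly F[3]}) : Prop :=
  forall m, m \in msupp T -> forall i : 'I_3, (m i < #|F|)%N.

Definition propA (F : finFieldType) (T : {mpoly F[3]}) : Prop :=
  forall a b z : F, ev3 T a 0 z = z /\ ev3 T 0 b z = z.

Definition propC (F : finFieldType) (T : {mpoly F[3]}) : Prop :=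
  forall a b c d : F, a != c -> exists! x : F, ev3 T x a b = ev3 T x c d.

Definition propE (F : finFieldType) (T : {mpoly F[3]}) : Prop :=
  forall a b c d : F, a != c ->
    exists! yz : F * F, ev3 T a yz.1 yz.2 = b /\ ev3 T c yz.1 yz.2 = d.

Definition propD (F : finFieldType) (T : {mpoly F[3]}) : Prop :=
  forall a b c : F, exists! z : F, ev3 T a b z = c.

Definition perm_poly3 (F : finFieldType) (T : {mpoly F[3]}) : Prop :=
  forall d : F, #|[set t : F * F * F | ev3 T t.1.1 t.1.2 t.2 == d]| = (#|F| ^ 2)%N.

From mathcomp Require Import all_boot all_order all_algebra all_field.
From mathcomp Require Import mpoly.
Set Implicit Arguments. Unset Strict Implicit. Unset Printing Implicit Defensive.

(* Only the function (x, y, z) |-> T(x, y, z) matters.  Count the solutions of T(x, y, z) = d slice by slice.  Under (d)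
   each pair (x, y) has exactly one z.  Under (a), the slice y = 0 is
   {z = d}, with one z for each x; for y <> 0, (c) applied to (y, z) and
   (0, d) gives exactly one x for each z, since T(x, 0, d) = d.
   Symmetrically, (a) and (e) give exactly one y for each z in every slice
   x <> 0.  Every slice thus has q solutions, q^2 in total. *)

Section SliceCounting.

Variable X : finType.

Lemma sum_eq_exists_unique (Y : eqType) (f : X -> Y) (c : Y) :
  (exists! x, f x = c) -> (\sum_x (f x == c : nat) = 1)%N.
Proof.
case=> x [fx_c fE]; rewrite (bigD1 x) //= fx_c eqxx big1 // => y y_neq_x.
by case: eqP => // /fE x_eq_y; rewrite x_eq_y eqxx in y_neq_x.
Qed.

Lemma sum2_exists_unique_r (Y : eqType) (f : X -> X -> Y) (c : Y) :
  (forall u, exists! v, f u v = c) ->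
  (\sum_u \sum_v (f u v == c : nat) = #|X|)%N.
Proof.
move=> fE; rewrite -sum1_card; apply: eq_bigr => u _.
exact: sum_eq_exists_unique.
Qed.

Lemma sum2_exists_unique_l (Y : eqType) (f : X -> X -> Y) (c : Y) :
  (forall v, exists! u, f u v = c) ->
  (\sum_u \sum_v (f u v == c : nat) = #|X|)%N.
Proof.
move=> fE; rewrite exchange_big /=.
exact: (@sum2_exists_unique_r _ (fun v u => f u v)).
Qed.

Lemma card_triples (Y : eqType) (f : X -> X -> X -> Y) (c : Y) :
  #|[set u : X * X * X | f u.1.1 u.1.2 u.2 == c]| =
  (\sum_x \sum_y \sum_z (f x y z == c : nat))%N.
Proof.
rewrite pair_big /= pair_big /= -sum1_card big_mkcond /=.
by apply: eq_bigr => u _; rewrite inE; case: (_ == c).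
Qed.

Lemma sum3_slices (P : X -> X -> X -> bool) :
  (forall s, \sum_u \sum_v (P s u v : nat) = #|X|)%N ->
  (\sum_s \sum_u \sum_v (P s u v : nat) = #|X| ^ 2)%N.
Proof. by move=> slice; rewrite (eq_bigr _ (fun s _ => slice s)) sum_nat_const. Qed.

End SliceCounting.

Section TernaryFunctions.

Variables (X : finType) (o : X) (t : X -> X -> X -> X) (d : X).

Let fiber := [set u : X * X * X | t u.1.1 u.1.2 u.2 == d].

Lemma card_fiber_unique_last :
  (forall a b c, exists! z, t a b z = c) -> #|fiber| = (#|X| ^ 2)%N.
Proof.
move=> tD; rewrite /fiber card_triples; apply: sum3_slices => x.
exact: sum2_exists_unique_r.
Qed.

Lemma exists_unique_eq_projr (f : X -> X -> X) :
  (forall u v, f u v = v) -> forall u, exists! v, f u v = d.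
Proof. by move=> fK u; exists d; split=> [|v]; rewrite fK. Qed.

Lemma card_fiber_propAC :
  (forall x z, t x o z = z) ->
  (forall a b c e, a != c -> exists! x, t x a b = t x c e) ->
  #|fiber| = (#|X| ^ 2)%N.
Proof.
move=> tK tC; rewrite /fiber card_triples exchange_big; apply: sum3_slices => y.
have [->|y_neq_o] := eqVneq y o.
  exact/sum2_exists_unique_r/exists_unique_eq_projr.
apply: sum2_exists_unique_l => z.
have [x [/[!tK] txyz_d xE]] := tC y z o d y_neq_o.
by exists x; split=> // x' tx'yz_d; apply: xE; rewrite tK.
Qed.

Lemma card_fiber_propAE :
  (forall y z, t o y z = z) ->
  (forall a b c e, a != c ->
     exists! yz : X * X, t a yz.1 yz.2 = b /\ t c yz.1 yz.2 = e) ->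
  #|fiber| = (#|X| ^ 2)%N.
Proof.
move=> tK tE; rewrite /fiber card_triples; apply: sum3_slices => x.
have [->|x_neq_o] := eqVneq x o.
  exact/sum2_exists_unique_r/exists_unique_eq_projr.
apply: sum2_exists_unique_l => z.
have [[y z'] [/= [yz_d] /[!tK] z'_z yzE]] := tE x d o z x_neq_o.
rewrite {}z'_z in yz_d yzE; exists y; split=> // y' y'z_d.
by case: (yzE (y', z) (conj y'z_d (tK y' z))).
Qed.

End TernaryFunctions.

Theorem corollary4p5 (F : finFieldType) (T : {mpoly F[3]}) :
  reduced T ->
  ((propA T /\ (propC T \/ propE T)) \/ propD T) ->
  perm_poly3 T.
Proof.
move=> _ [[tA [tC|tE]]|tD] d.
- by apply: (card_fiber_propAC (o := 0%R) d _ tC) => x z; have [] := tA x 0%R z.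
- by apply: (card_fiber_propAE (o := 0%R) d _ tE) => y z; have [] := tA 0%R y z.
- exact: card_fiber_unique_last.
Qed.
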